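(* For each $n\ge2$ there exists a constant $\beta_n>0$, depending only on $n$, such that for every lattice $\Lambda\subset\mathbb R^n$ and every special basis $(u_1,\dots,u_n)$ of $\Lambda$, the flat torus $\mathbb R^n/\Lambda$ satisfies $\mathrm{diam}(\mathbb R^n/\Lambda)\ge\beta_n|u_1|$.
   Context: For nonzero $v$ and a nontrivial subspace $W\subset\mathbb R^n$, $\mathrm{ang}(v,W)$ is the minimum angle between $v$ and nonzero vectors of $W$. Let $\theta_n=\arcsin(2^{-n(n-1)/4})$. Say a $\mathbb Z$-basis $v_1,\dots,v_n$ of a lattice $\Lambda$ satisfies the angle condition if $\mathrm{ang}(v_i,\mathrm{span}_{\mathbb R}\{v_j:j\neq i\})\ge\theta_n$ for all $i$ (such bases always exist). Let $R_0(\Lambda)$ be the minimal $r>0$ such that the closed ball of radius $r$ centered at $0$ contains a $\mathbb Z$-basis of $\Lambda$ satisfying the angle condition. A special basis of $\Lambda$ is an ordered $\mathbb Z$-basis $(u_1,\dots,u_n)$ satisfying the angle condition, contained in that closed ball of radius $R_0(\Lambda)$, ordered so that $|u_1|\ge|u_2|\ge\dots\ge|u_n|$, and minimal among all such ordered bases for the lexicographic order of the tuples $(|u_1|,\dots,|u_n|)$. The diameter of $\mathbb R^n/\Lambda$ is with respect to the flat metric induced from Euclidean $\mathbb R^n$. *)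

From Stdlib Require Import Reals Lra ZArith.
Open Scope R_scope.

(* Vectors of R^n are represented as functions nat -> R; only the
   coordinates k < n are meaningful. Families of vectors (bases) are
   functions nat -> vec, with indices 0..n-1. *)
Definition vec := nat -> R.

Fixpoint fsum (n : nat) (f : nat -> R) : R :=
  match n with
  | O => 0
  | S m => fsum m f + f m
  end.

Definition veq (n : nat) (x y : vec) : Prop := forall k, (k < n)%nat -> x k = y k.
Definition vzero : vec := fun _ => 0.
Definition vsub (x y : vec) : vec := fun k => x k - y k.
Definition dot (n : nat) (x y : vec) : R := fsum n (fun k => x k * y k).
Definition norm (n : nat) (x : vec) : R := sqrt (dot n x x).

Definition lincomb (n : nat) (c : nat -> R) (b : nat -> vec) : vec :=
  fun k => fsum n (fun j => c j * b j k).

Definition lin_indep (n : nat) (b : nat -> vec) : Prop :=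
  forall c : nat -> R, veq n (lincomb n c b) vzero -> forall j, (j < n)%nat -> c j = 0.

Definition in_Zspan (n : nat) (b : nat -> vec) (x : vec) : Prop :=
  exists z : nat -> Z, veq n x (lincomb n (fun j => IZR (z j)) b).

Definition is_lattice (n : nat) (L : vec -> Prop) : Prop :=
  exists b : nat -> vec, lin_indep n b /\ forall x, L x <-> in_Zspan n b x.

Definition is_Zbasis (n : nat) (L : vec -> Prop) (b : nat -> vec) : Prop :=
  (forall z : nat -> Z,
     veq n (lincomb n (fun j => IZR (z j)) b) vzero -> forall j, (j < n)%nat -> z j = 0%Z)
  /\ (forall x, L x <-> in_Zspan n b x).

Definition angle (n : nat) (v w : vec) : R := acos (dot n v w / (norm n v * norm n w)).

Definition theta (n : nat) : R := asin (Rpower 2 (- (INR n * (INR n - 1)) / 4)).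

(* ang(v_i, span{v_j : j <> i}) >= theta_n : since ang is the minimum of the
   angles to nonzero vectors of the subspace, this says every such angle is
   >= theta_n. *)
Definition angle_condition (n : nat) (b : nat -> vec) : Prop :=
  forall i, (i < n)%nat ->
    forall c : nat -> R,
      let w := lincomb n (fun j => if Nat.eqb j i then 0 else c j) b in
      ~ veq n w vzero -> angle n (b i) w >= theta n.

Definition good_basis (n : nat) (L : vec -> Prop) (b : nat -> vec) : Prop :=
  is_Zbasis n L b /\ angle_condition n b.

Definition in_ball (n : nat) (r : R) (b : nat -> vec) : Prop :=
  forall i, (i < n)%nat -> norm n (b i) <= r.

Definition is_R0 (n : nat) (L : vec -> Prop) (r : R) : Prop :=
  r > 0 /\ (exists b, good_basis n L b /\ in_ball n r b) /\
  (forall r', r' > 0 -> (exists b, good_basis n L b /\ in_ball n r' b) -> r <= r').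

Definition sorted_desc (n : nat) (b : nat -> vec) : Prop :=
  forall i, (S i < n)%nat -> norm n (b i) >= norm n (b (S i)).

Definition lex_le (n : nat) (a c : nat -> R) : Prop :=
  (forall i, (i < n)%nat -> a i = c i) \/
  (exists k, (k < n)%nat /\ (forall i, (i < k)%nat -> a i = c i) /\ a k < c k).

Definition candidate (n : nat) (L : vec -> Prop) (r : R) (b : nat -> vec) : Prop :=
  good_basis n L b /\ in_ball n r b /\ sorted_desc n b.

(* special basis (u_1,...,u_n) = (u 0, ..., u (n-1)) *)
Definition special_basis (n : nat) (L : vec -> Prop) (u : nat -> vec) : Prop :=
  exists r, is_R0 n L r /\ candidate n L r u /\
    forall v, candidate n L r v ->
      lex_le n (fun i => norm n (u i)) (fun i => norm n (v i)).

Definition is_inf (E : R -> Prop) (m : R) : Prop :=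
  (forall t, E t -> m <= t) /\ (forall m', (forall t, E t -> m' <= t) -> m' <= m).

Definition is_sup (E : R -> Prop) (m : R) : Prop :=
  (forall t, E t -> t <= m) /\ (forall m', (forall t, E t -> t <= m') -> m <= m').

Definition torus_dist (n : nat) (L : vec -> Prop) (x y : vec) (d : R) : Prop :=
  is_inf (fun t => exists l, L l /\ t = norm n (vsub (vsub x y) l)) d.

Definition torus_diam (n : nat) (L : vec -> Prop) (D : R) : Prop :=
  is_sup (fun d => exists x y, torus_dist n L x y d) D.

(** A special basis satisfies the angle condition, so every vector [w] of the
    span of [u_2, ..., u_n] lies at distance at least [sin θ_n |u_1|] from
    [u_1].  A lattice vector [l] differs from [u_1/2] by [t (u_1 - w)] with
    such a [w] and [|t| >= 1/2], since the coefficient of [u_1] in [u_1/2 - l]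
    is a half-integer.  Hence the class of [u_1/2] in
    the torus lies at distance at least [sin θ_n |u_1| / 2] from the class of
    [0], and [β_n = sin θ_n / 2] works.  The diameter exists because every
    point lies within the bounded fundamental parallelepiped of a lattice
    point. *)

From Stdlib Require Import Reals Lra Lia ZArith Classical.
From mathcomp Require ssreflect ssrbool eqtype ssrnat fintype bigop ssralg matrix Rstruct.
Open Scope R_scope.

Lemma fsum_ext n f g :
  (forall k, (k < n)%nat -> f k = g k) -> fsum n f = fsum n g.
Proof.
  induction n as [|n IH]; intros H; simpl; [reflexivity|].
  rewrite IH by (intros; apply H; lia). rewrite H by lia. reflexivity.
Qed.

Lemma fsum_linear n a b f g :
  fsum n (fun k => a * f k + b * g k) = a * fsum n f + b * fsum n g.
Proof. induction n as [|n IH]; simpl; [ring|]. rewrite IH. ring. Qed.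

Lemma fsum_scal_l n a f : fsum n (fun k => a * f k) = a * fsum n f.
Proof. induction n as [|n IH]; simpl; [ring|]. rewrite IH. ring. Qed.

Lemma fsum_le n f g :
  (forall k, (k < n)%nat -> f k <= g k) -> fsum n f <= fsum n g.
Proof.
  induction n as [|n IH]; intros H; simpl; [lra|].
  assert (fsum n f <= fsum n g) by (apply IH; intros; apply H; lia).
  assert (f n <= g n) by (apply H; lia). lra.
Qed.

Lemma Rabs_fsum_le n f g :
  (forall k, (k < n)%nat -> Rabs (f k) <= g k) -> Rabs (fsum n f) <= fsum n g.
Proof.
  induction n as [|n IH]; intros H; simpl; [rewrite Rabs_R0; lra|].
  eapply Rle_trans; [apply Rabs_triang|].
  assert (Rabs (fsum n f) <= fsum n g) by (apply IH; intros; apply H; lia).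
  assert (Rabs (f n) <= g n) by (apply H; lia). lra.
Qed.

Lemma fsum_split_at n i f : (i < n)%nat ->
  fsum n f = f i + fsum n (fun j => if Nat.eqb j i then 0 else f j).
Proof.
  induction n as [|n IH]; intros Hi; simpl; [lia|].
  destruct (Nat.eqb_spec n i) as [->|Hne].
  - rewrite (fsum_ext i (fun j => if Nat.eqb j i then 0 else f j) f); [ring|].
    intros k Hk. destruct (Nat.eqb_spec k i); [lia|reflexivity].
  - rewrite IH by lia. ring.
Qed.

Lemma fsum_sqr_nonneg n x : 0 <= fsum n (fun k => x k * x k).
Proof.
  induction n as [|n IH]; simpl; [lra|].
  assert (0 <= x n * x n) by nra. lra.
Qed.

Lemma fsum_sqr_eq0 n x : fsum n (fun k => x k * x k) = 0 -> veq n x vzero.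
Proof.
  induction n as [|n IH]; simpl; intros H k Hk; [lia|].
  pose proof (fsum_sqr_nonneg n x). assert (0 <= x n * x n) by nra.
  unfold vzero. destruct (Nat.eq_dec k n) as [->|Hne]; [nra|].
  apply IH; [lra|lia].
Qed.

Lemma dot_self_nonneg n x : 0 <= dot n x x.
Proof. apply fsum_sqr_nonneg. Qed.

Lemma dot_vsub_self n u w :
  dot n (vsub u w) (vsub u w) = dot n u u - 2 * dot n u w + dot n w w.
Proof.
  unfold dot, vsub.
  rewrite (fsum_ext n _ (fun k => 1 * (u k * u k) + 1 * (-2 * (u k * w k) + 1 * (w k * w k))))
    by (intros; ring).
  rewrite !fsum_linear. ring.
Qed.

Lemma norm_nonneg n x : 0 <= norm n x.
Proof. apply sqrt_pos. Qed.

Lemma norm_mul_self n x : norm n x * norm n x = dot n x x.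
Proof. apply sqrt_sqrt, dot_self_nonneg. Qed.

Lemma norm_veq n x y : veq n x y -> norm n x = norm n y.
Proof.
  intros H. unfold norm, dot. f_equal.
  apply fsum_ext. intros k Hk. rewrite H by exact Hk. reflexivity.
Qed.

Lemma norm_veq_zero n x : veq n x vzero -> norm n x = 0.
Proof.
  intros H. rewrite (norm_veq n x vzero H). unfold norm, dot, vzero.
  assert (E : fsum n (fun _ => 0 * 0) = 0)
    by (etransitivity; [apply (fsum_scal_l n 0 (fun _ => 0))|ring]).
  rewrite E. apply sqrt_0.
Qed.

Lemma norm_pos n x : ~ veq n x vzero -> 0 < norm n x.
Proof.
  intros H. pose proof (dot_self_nonneg n x).
  destruct (Req_dec (dot n x x) 0) as [E|E].
  - exfalso. exact (H (fsum_sqr_eq0 n x E)).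
  - apply sqrt_lt_R0. lra.
Qed.

Lemma norm_scal n t x : norm n (fun k => t * x k) = Rabs t * norm n x.
Proof.
  unfold norm, dot.
  rewrite (fsum_ext n _ (fun k => (t * t) * (x k * x k))) by (intros; ring).
  rewrite fsum_scal_l, sqrt_mult_alt by nra.
  change (t * t) with (Rsqr t). rewrite sqrt_Rsqr_abs. reflexivity.
Qed.

Module LinearAlgebra.
Import ssreflect ssrbool eqtype ssrnat fintype bigop ssralg matrix Rstruct.
Import GRing.Theory.
Local Open Scope ring_scope.

Lemma fsum_big n (f : nat -> R) : fsum n f = \sum_(i < n) f i.
Proof.
elim: n => [|n IH]; first by rewrite big_ord0.
by rewrite big_ord_recr /= IH.
Qed.

Lemma lin_indep_spans n (b : nat -> vec) : lin_indep n b ->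
  forall v : vec, exists c : nat -> R, veq n v (lincomb n c b).
Proof.
case: n => [|m] Hb v; first by exists (fun _ => 0) => k /ltP.
pose M : 'M[R]_m.+1 := \matrix_(i, j) b i j.
have mulmxE (A : 'rV[R]_m.+1) k (Hk : (k < m.+1)%coq_nat) :
    (A *m M) ord0 (Ordinal (introT ltP Hk)) = lincomb m.+1 (fun j => A ord0 (inord j)) b k.
  by rewrite /lincomb fsum_big mxE; apply: eq_bigr => j _; rewrite inord_val mxE.
have M_unit : M \in unitmx.
  rewrite unitmxE unitfE; apply/negP => /det0P [w /negP w_neq0 wM0].
  apply: w_neq0; apply/eqP/rowP => i.
  have := Hb (fun j => w ord0 (inord j)) _ i (elimT ltP (ltn_ord i)).
  rewrite inord_val mxE; apply=> k Hk.
  by rewrite -mulmxE wM0 mxE.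
pose r : 'rV[R]_m.+1 := \row_k v k.
exists (fun j => (r *m invmx M) ord0 (inord j)) => k Hk.
by rewrite -mulmxE mulmxKV // mxE.
Qed.
End LinearAlgebra.

Lemma acos_ge_le_cos r a : 0 < a <= PI -> acos r >= a -> r <= cos a.
Proof.
  intros Ha H. pose proof (COS_bound a).
  destruct (Rle_dec r (-1)) as [Hr|Hr]; [lra|].
  destruct (Rle_dec 1 r) as [Hr'|Hr'].
  - (* Stdlib's [acos] is [0] on [[1, +oo)]. *)
    exfalso. unfold acos in H.
    destruct (Rle_dec r (-1)); [lra|]. destruct (Rle_dec 1 r); lra.
  - pose proof (acos_bound r). rewrite <- (cos_acos r) by lra.
    destruct (Req_dec (acos r) a) as [->|Hne]; [lra|].
    left. apply cos_decreasing_1; lra.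
Qed.

(* Expanding [|u - w|^2] and bounding [<u, w>] by [cos a |u| |w|] leaves
   [(cos a |u| - |w|)^2 + sin^2 a |u|^2]. *)
Lemma sin_mul_norm_le_norm_vsub n a u w : 0 < a <= PI ->
  (~ veq n w vzero -> angle n u w >= a) -> sin a * norm n u <= norm n (vsub u w).
Proof.
  intros Ha Hang. unfold angle in Hang.
  assert (Hsin : 0 <= sin a) by (apply sin_ge_0; lra).
  destruct (classic (veq n w vzero)) as [Hw|Hw].
  { rewrite (norm_veq n (vsub u w) u)
      by (intros k Hk; unfold vsub; rewrite (Hw k Hk); unfold vzero; ring).
    pose proof (SIN_bound a). pose proof (norm_nonneg n u). nra. }
  destruct (classic (veq n u vzero)) as [Hu|Hu].
  { rewrite (norm_veq_zero n u Hu), Rmult_0_r. apply norm_nonneg. }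
  pose proof (norm_pos n u Hu) as Pu. pose proof (norm_pos n w Hw) as Pw.
  pose proof (acos_ge_le_cos _ a Ha (Hang Hw)) as Hcos.
  pose proof (sin2_cos2 a) as Hpyth. unfold Rsqr in Hpyth.
  set (s := sin a) in *. set (c := cos a) in *.
  set (x := norm n u) in *. set (y := norm n w) in *.
  assert (Hdot : dot n u w <= c * (x * y)).
  { apply (Rmult_le_compat_r (x * y)) in Hcos; [|nra].
    unfold Rdiv in Hcos. rewrite Rmult_assoc, Rinv_l in Hcos by nra. lra. }
  assert (Hsq : (s * x) * (s * x) <= dot n (vsub u w) (vsub u w)).
  { rewrite dot_vsub_self, <- (norm_mul_self n u), <- (norm_mul_self n w). fold x y.
    pose proof (Rle_0_sqr (c * x - y)) as H. unfold Rsqr in H. nra. }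
  rewrite <- (sqrt_square (s * x)) by (apply Rmult_le_pos; lra).
  apply sqrt_le_1_alt, Hsq.
Qed.

Lemma theta_range n : 0 < theta n <= PI / 2.
Proof.
  unfold theta. set (s := Rpower 2 _).
  assert (Hs : 0 < s <= 1).
  { split; [apply exp_pos|].
    rewrite <- (Rpower_O 2) by lra. apply Rle_Rpower; [lra|].
    assert (0 <= INR n * (INR n - 1)).
    { destruct n; [simpl; lra|]. rewrite S_INR. pose proof (pos_INR n). nra. }
    lra. }
  pose proof (asin_bound s). split; [|lra].
  destruct (Rle_dec (asin s) 0) as [Hle|Hgt]; [|lra].
  pose proof PI_RGT_0.
  assert (Hsin : 0 <= sin (- asin s)) by (apply sin_ge_0; lra).
  rewrite sin_neg, sin_asin in Hsin by lra. lra.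
Qed.

Lemma Rabs_half_minus_IZR (z : Z) : 1 / 2 <= Rabs (1 / 2 - IZR z).
Proof.
  destruct (Z_le_gt_dec z 0) as [H|H].
  - apply IZR_le in H. rewrite Rabs_right by lra. lra.
  - assert (H' : (1 <= z)%Z) by lia. apply IZR_le in H'.
    rewrite Rabs_left by lra. lra.
Qed.

(* Writing [l = sum_j z_j u_j], one has [u_i/2 - l = t (u_i - w)] with
   [t = 1/2 - z_i] and [w = sum_(j <> i) (z_j / t) u_j]. *)
Lemma Zspan_far_from_half_vector n u i l : (i < n)%nat ->
  angle_condition n u -> in_Zspan n u l ->
  sin (theta n) / 2 * norm n (u i) <= norm n (vsub (fun k => u i k / 2) l).
Proof.
  intros Hi Hang [z Hz].
  set (t := 1 / 2 - IZR (z i)).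
  assert (Ht : 1 / 2 <= Rabs t) by apply Rabs_half_minus_IZR.
  assert (Ht0 : t <> 0) by (intros E; rewrite E, Rabs_R0 in Ht; lra).
  set (w := lincomb n (fun j => if Nat.eqb j i then 0 else IZR (z j) / t) u).
  assert (Hfar : sin (theta n) * norm n (u i) <= norm n (vsub (u i) w)).
  { apply sin_mul_norm_le_norm_vsub; [|exact (Hang i Hi _)].
    pose proof (theta_range n). pose proof PI_RGT_0. lra. }
  rewrite (norm_veq n (vsub (fun k => u i k / 2) l) (fun k => t * vsub (u i) w k)).
  - rewrite norm_scal. pose proof (norm_nonneg n (vsub (u i) w)).
    assert (0 <= (Rabs t - 1 / 2) * norm n (vsub (u i) w)) by (apply Rmult_le_pos; lra).
    lra.
  - intros k Hk. unfold vsub. rewrite (Hz k Hk). unfold w, lincomb.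
    rewrite (fsum_split_at n i (fun j => IZR (z j) * u j k)) by exact Hi.
    rewrite (fsum_ext n (fun j => (if Nat.eqb j i then 0 else IZR (z j) / t) * u j k)
               (fun j => / t * (if Nat.eqb j i then 0 else IZR (z j) * u j k))).
    + rewrite fsum_scal_l, Rmult_minus_distr_l, <- Rmult_assoc, Rinv_r, Rmult_1_l by exact Ht0.
      set (S := fsum n _). unfold t. field.
    + intros j _. destruct (Nat.eqb j i); [ring|field; exact Ht0].
Qed.

(* Rounding the real coordinates down moves a point by a vector of the
   fundamental parallelepiped, whose [k]-th coordinate is bounded by
   [sum_j |b_j k|]. *)
Lemma lattice_covering_bound n L b : lin_indep n b ->
  (forall x, L x <-> in_Zspan n b x) ->
  exists K, forall x, exists l, L l /\ norm n (vsub x l) <= K.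
Proof.
  intros Hb HL.
  set (B := fun k => fsum n (fun j => Rabs (b j k))).
  exists (sqrt (fsum n (fun k => B k * B k))).
  intros x. destruct (LinearAlgebra.lin_indep_spans n b Hb x) as [c Hc].
  set (z := fun j => (up (c j) - 1)%Z).
  exists (lincomb n (fun j => IZR (z j)) b).
  split; [apply HL; exists z; intros k _; reflexivity|].
  apply sqrt_le_1_alt, fsum_le. intros k Hk.
  assert (Hfrac : forall j, 0 <= c j - IZR (z j) <= 1).
  { intros j. unfold z. rewrite minus_IZR. destruct (archimed (c j)). simpl. lra. }
  set (e := vsub x (lincomb n (fun j => IZR (z j)) b) k).
  assert (He : Rabs e <= B k).
  { unfold e, vsub. rewrite (Hc k Hk). unfold lincomb.
    replace (fsum n (fun j => c j * b j k) - fsum n (fun j => IZR (z j) * b j k))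
      with (fsum n (fun j => 1 * (c j * b j k) + -1 * (IZR (z j) * b j k)))
      by (rewrite fsum_linear; ring).
    apply Rabs_fsum_le. intros j _. specialize (Hfrac j).
    replace (1 * (c j * b j k) + -1 * (IZR (z j) * b j k)) with ((c j - IZR (z j)) * b j k)
      by ring.
    rewrite Rabs_mult, (Rabs_right (c j - IZR (z j))) by lra.
    pose proof (Rabs_pos (b j k)). nra. }
  pose proof (Rabs_pos e).
  assert (e * e = Rabs e * Rabs e) by (rewrite <- Rabs_mult, Rabs_right; [ring|apply Rle_ge, Rle_0_sqr]).
  nra.
Qed.

Lemma is_inf_exists (E : R -> Prop) m0 :
  (exists t, E t) -> (forall t, E t -> m0 <= t) -> exists m, is_inf E m.
Proof.
  intros [t0 Ht0] Hlb.
  destruct (completeness (fun t => E (- t))) as [m [Hm1 Hm2]].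
  - exists (- m0). intros t Ht. apply Hlb in Ht. lra.
  - exists (- t0). rewrite Ropp_involutive. exact Ht0.
  - exists (- m). split.
    + intros t Ht. assert (- t <= m) by (apply Hm1; rewrite Ropp_involutive; exact Ht). lra.
    + intros m' Hm'. assert (m <= - m') by (apply Hm2; intros t Ht; apply Hm' in Ht; lra). lra.
Qed.

Lemma is_sup_exists (E : R -> Prop) M :
  (exists t, E t) -> (forall t, E t -> t <= M) -> exists m, is_sup E m.
Proof.
  intros Hne Hub.
  destruct (completeness E) as [m [Hm1 Hm2]]; [exists M; exact Hub|exact Hne|].
  exists m. split; [exact Hm1|exact Hm2].
Qed.

Section TorusMetric.
Variables (n : nat) (L : vec -> Prop) (K : R).
Hypothesis covering : forall x, exists l, L l /\ norm n (vsub x l) <= K.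

Lemma torus_dist_exists x y : exists d, torus_dist n L x y d.
Proof.
  apply (is_inf_exists _ 0).
  - destruct (covering (vsub x y)) as [l [Hl _]]. eexists. exists l. split; [exact Hl|reflexivity].
  - intros t [l [_ ->]]. apply norm_nonneg.
Qed.

Lemma torus_dist_le x y d : torus_dist n L x y d -> d <= K.
Proof.
  intros Hd. destruct (covering (vsub x y)) as [l [Hl HK]].
  eapply Rle_trans; [apply (proj1 Hd); exists l; split; [exact Hl|reflexivity]|exact HK].
Qed.

Lemma torus_diam_exists : exists D, torus_diam n L D.
Proof.
  apply (is_sup_exists _ K).
  - destruct (torus_dist_exists vzero vzero) as [d Hd]. exists d, vzero, vzero. exact Hd.
  - intros d [x [y Hd]]. exact (torus_dist_le x y d Hd).
Qed.
End TorusMetric.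

Theorem mainTheorem17 :
  forall n : nat, (2 <= n)%nat ->
  exists beta : R, beta > 0 /\
    forall (L : vec -> Prop), is_lattice n L ->
    forall (u : nat -> vec), special_basis n L u ->
    exists D : R, torus_diam n L D /\ D >= beta * norm n (u 0%nat).
Proof.
  intros n Hn. exists (sin (theta n) / 2). split.
  { pose proof (theta_range n). pose proof PI_RGT_0.
    assert (0 < sin (theta n)) by (apply sin_gt_0; lra). lra. }
  intros L [b [Hb HL]] u [r [_ [[[[_ Hu] Hang] _] _]]].
  destruct (lattice_covering_bound n L b Hb HL) as [K HK].
  destruct (torus_diam_exists n L K HK) as [D HD].
  set (half := fun k => u 0%nat k / 2).
  destruct (torus_dist_exists n L K HK half vzero) as [d Hd].
  exists D. split; [exact HD|].
  assert (sin (theta n) / 2 * norm n (u 0%nat) <= d).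
  { apply (proj2 Hd). intros t [l [Hl ->]].
    rewrite (norm_veq n (vsub (vsub half vzero) l) (vsub half l))
      by (intros k _; unfold vsub, vzero; lra).
    apply Zspan_far_from_half_vector; [lia|exact Hang|apply Hu, Hl]. }
  assert (d <= D) by (apply (proj1 HD); exists half, vzero; exact Hd).
  lra.
Qed.
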